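(* If $\mathbf{X}$ satisfies (A1), then for every $j\ge1$, $$W_j\le\lambda^{\max}\Big(M^{abs}_{T_j,\,T_{j+1}-1}+|U_{T_j}|\Big)\,I\{T_j<\infty\}\quad\text{a.e.},$$ where $T_{j+1}-1$ is interpreted as $\infty$ when $T_{j+1}=\infty$.
   Context: $\mathbf{X}=\{X_n\}_{n\ge0}$ is a real-valued integrable process adapted to a filtration $\{\mathcal{F}_n\}_{n\ge0}$; $\epsilon_n=X_n-E[X_n\mid\mathcal{F}_{n-1}]$, $n\ge1$; $U_n=E[X_n\mid\mathcal{F}_{n-1}]\,I\{X_{n-1}=0\}$. Events: $D^+_n=\{X_n>0\}$, $D^-_n=\{X_n<0\}$, $D^0_n=\{X_n=0\}$, and for $n\ge1$, $D_n=D^+_n(D^+_{n-1})^c\cup D^-_n(D^-_{n-1})^c\cup D^0_n(D^0_{n-1})^c$. For $j\ge1$, $T_j=\inf\{t\ge1:\sum_{i=1}^tI\{D_i\}\ge j\}$ ($\inf\emptyset=\infty$). $W_j=\sup_{T_j\le i<T_{j+1}}|X_i|$ if $T_j<\infty$ and $W_j=0$ if $T_j=\infty$. $M^{abs}_{s,t}=\sum_{i=s}^t|\epsilon_i|$ (allowing $t=\infty$, with value possibly $+\infty$). (A1) There are constants $\alpha_n\ge0$ with $\sum_n\alpha_n<\infty$ such that a.e., for all $n\ge1$: $0\le \frac{E[X_n\mid\mathcal{F}_{n-1}]}{X_{n-1}}I\{X_{n-1}\ne0\}\le 1+\alpha_n$. $\lambda^k_t=\prod_{i=t-k+1}^t(1+\alpha_i)$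 for $t,k\ge1$, $\lambda^0_t=1$, and $\lambda^{\max}=\sup_{t,k}\lambda^k_t$ (finite under (A1)). *)

From HB Require Import structures.
From mathcomp Require Import all_boot all_order all_algebra.
From mathcomp Require Import all_classical all_reals all_analysis.
Set Implicit Arguments. Unset Strict Implicit. Unset Printing Implicit Defensive.
Import Order.TTheory GRing.Theory Num.Theory.
Local Open Scope classical_set_scope.
Local Open Scope ring_scope.

Section Defs.
Context {d : measure_display} {T : measurableType d} {R : realType}.

Definition Gmeasurable (G : set (set T)) (f : T -> R) :=
  forall B : set R, measurable B -> G (f @^-1` B).

Definition sub_sigma_algebra (G : set (set T)) :=
  sigma_algebra setT G /\ (forall A, G A -> measurable A).

Definition filtration (F : nat -> set (set T)) :=
  (forall n, sub_sigma_algebra (F n)) /\ (forall n m, (n <= m)%N -> F n `<=` F m).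

Definition is_cond_exp (P : probability T R) (G : set (set T)) (X Y : T -> R) :=
  [/\ Gmeasurable G Y, P.-integrable setT (EFin \o Y) &
      forall A, G A -> (\int[P]_(x in A) (Y x)%:E = \int[P]_(x in A) (X x)%:E)%E].

(* epsilon_n = X_n - E[X_n | F_{n-1}], with Y n a version of E[X_n | F_{n-1}] *)
Definition eps (X Y : nat -> T -> R) (n : nat) (w : T) : R := X n w - Y n w.

Definition Uproc (X Y : nat -> T -> R) (n : nat) (w : T) : R :=
  Y n w * (X n.-1 w == 0)%:R.

(* indicator of D_n (n >= 1): change of sign class between n-1 and n *)
Definition Dn (X : nat -> T -> R) (n : nat) (w : T) : bool :=
  [|| (0 < X n w) && ~~ (0 < X n.-1 w),
      (X n w < 0) && ~~ (X n.-1 w < 0)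
    | (X n w == 0) && (X n.-1 w != 0)].

Definition Tj (X : nat -> T -> R) (j : nat) (w : T) : \bar R :=
  ereal_inf [set (t%:R)%:E | t in
     [set t : nat | (1 <= t)%N /\ (j <= \sum_(1 <= i < t.+1) Dn X i w)%N]].

Definition Wj (X : nat -> T -> R) (j : nat) (w : T) : \bar R :=
  if (Tj X j w < +oo)%E then
    ereal_sup [set (`|X i w|)%:E | i in
      [set i : nat | (Tj X j w <= (i%:R)%:E)%E /\ ((i%:R)%:E < Tj X j.+1 w)%E]]
  else 0%E.

Definition Mabs (X Y : nat -> T -> R) (s : nat) (t : \bar R) (w : T) : \bar R :=
  (\esum_(i in [set i : nat | (s <= i)%N /\ ((i%:R)%:E <= t)%E]) (`|eps X Y i w|)%:E)%E.

End Defs.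

Definition lambda {R : realType} (alpha : nat -> R) (k t : nat) : R :=
  \prod_(t.+1 - k <= i < t.+1) (1 + alpha i).

(* lambda^max = sup_{t, k} lambda^k_t  (over 1 <= k <= t, so that all indices are >= 1) *)
Definition lambda_max {R : realType} (alpha : nat -> R) : \bar R :=
  ereal_sup [set x : \bar R | exists k t : nat,
     [/\ (1 <= k)%N, (k <= t)%N & x = (lambda alpha k t)%:E]].

From HB Require Import structures.
From mathcomp Require Import all_boot all_order all_algebra.
From mathcomp Require Import all_classical all_reals all_analysis.
From mathcomp Require Import zify.
Set Implicit Arguments.
Unset Strict Implicit.
Unset Printing Implicit Defensive.
Import Order.TTheory GRing.Theory Num.Theory numFieldNormedType.Exports.
Local Open Scope classical_set_scope.
Local Open Scope ring_scope.

(* On the event where (A1) holds the argument is pathwise.  Between the j-th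
   change of sign class, at m = T_j, and the next one, X keeps the sign s of
   X_m.  Multiplying by s turns the run into x_k = s X_k = |X_k| with
   x_k = s E[X_k | F_(k-1)] + s eps_k, and (A1) gives
   s E[X_k | F_(k-1)] <= (1 + alpha_k) x_(k-1) inside the run, while at its
   start s E[X_m | F_(m-1)] <= |U_m|.  Iterating,
   |X_i| <= prod_(m <= k <= i) (1 + alpha_k) (|U_m| + sum_(m <= k <= i) |eps_k|)
   for m <= i < T_(j+1), and the product is some lambda^k_t. *)

Lemma prod1D_ge1 (R : numDomainType) (a : nat -> R) m n :
  (forall k, 0 <= a k) -> 1 <= \prod_(m <= k < n) (1 + a k).
Proof.
move=> a_ge0; apply: (big_ind (fun x => 1 <= x)) => //; first exact: mulr_ege1.
by move=> k _; rewrite lerDl.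
Qed.

Lemma run_bound (R : realDomainType) (x y e a : nat -> R) (u : R) (t n : nat) :
  (forall k, 0 <= a k) -> 0 <= u -> y t <= u -> (forall k, x k = y k + e k) ->
  (forall k, (t < k <= n)%N -> y k <= (1 + a k) * x k.-1) -> (t <= n)%N ->
  x n <= (\prod_(t <= k < n.+1) (1 + a k)) * (u + \sum_(t <= k < n.+1) `|e k|).
Proof.
move=> a_ge0 u_ge0 yt_le xE.
have base : x t <= (\prod_(t <= k < t.+1) (1 + a k)) * (u + \sum_(t <= k < t.+1) `|e k|).
  rewrite !big_nat1 xE; apply: le_trans (ler_peMl _ _).
  - by apply: lerD => //; apply: ler_norm.
  - by rewrite addr_ge0.
  - by rewrite lerDl.
elim: n => [|n IH] step; rewrite leq_eqVlt => /orP[/eqP <- //|//= tn].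
rewrite !(big_nat_recr n.+1 t) /= ?(ltnW tn) //.
rewrite addrA xE mulrDr.
have L_ge1 := prod1D_ge1 t n.+1 a_ge0.
apply: lerD.
  apply: le_trans (step n.+1 _) _; first by rewrite tn leqnn.
  rewrite [_ * (1 + _)]mulrC -mulrA; apply: ler_wpM2l; first by rewrite addr_ge0.
  by apply: IH tn => k /andP[tk kn]; apply: step; rewrite tk leqW.
apply: le_trans (ler_norm _) (ler_peMl _ _) => //.
by apply: mulr_ege1 L_ge1 _; rewrite lerDl.
Qed.

Definition nhits (D : nat -> bool) (t : nat) : nat := (\sum_(1 <= i < t.+1) D i)%N.

Lemma nhits0 D : nhits D 0 = 0%N.
Proof. by rewrite /nhits big_geq. Qed.

Lemma nhitsS D t : nhits D t.+1 = (nhits D t + D t.+1)%N.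
Proof. by rewrite /nhits big_nat_recr. Qed.

Lemma nhits_homo D : {homo nhits D : s t / (s <= t)%N}.
Proof. by apply: homo_leq leq_trans _ => // t; rewrite nhitsS leq_addr. Qed.

Lemma hit_at_first_passage D j m : (0 < j)%N -> (0 < m)%N -> (j <= nhits D m)%N ->
  (forall k, (0 < k)%N -> (j <= nhits D k)%N -> (m <= k)%N) -> D m.
Proof.
move=> j_gt0; case: m => // m _ jm m_min; apply: contraT => NDm.
move: jm; rewrite nhitsS (negbTE NDm) addn0.
case: m m_min NDm => [|m] m_min _ jm; first by rewrite nhits0 leqNgt j_gt0 in jm.
by have := m_min m.+1 isT jm; rewrite ltnn.
Qed.

Lemma no_hit_before_next_passage D j m i : (j <= nhits D m)%N ->
  ~~ (j < nhits D i)%N -> forall k, (m < k <= i)%N -> ~~ D k.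
Proof.
move=> jm ji k /andP[mk ki]; apply: contra ji => Dk.
case: k mk ki Dk => // k; rewrite ltnS => mk ki Dk.
have := nhits_homo D ki; have := nhits_homo D mk; rewrite nhitsS Dk; lia.
Qed.

Section ereal_inf_nat.
Variable R : realType.
Implicit Type A : set nat.
Local Open Scope ereal_scope.

Lemma ereal_inf_natP A :
  ereal_inf [set (n%:R : R)%:E | n in A] = +oo \/
  exists m, [/\ ereal_inf [set (n%:R : R)%:E | n in A] = (m%:R)%:E, A m &
                forall k, A k -> (m <= k)%N].
Proof.
have [[k Ak]|A0] := pselect (exists k, A k); last first.
  left; suff -> : [set (n%:R : R)%:E | n in A] = set0 by rewrite ereal_inf0.
  by apply/seteqP; split => // x [n An _]; apply: A0; exists n.
right; have ex_A : exists n, `[< A n >] by exists k; apply/asboolP.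
case: (ex_minnP ex_A) => m /asboolP Am m_min.
exists m; split => //; last by move=> n An; apply: m_min; apply/asboolP.
apply/eqP; rewrite eq_le; apply/andP; split; first by apply: ereal_inf_lbound; exists m.
by apply/ereal_infP => _ [n An <-]; rewrite lee_fin ler_nat m_min //; apply/asboolP.
Qed.

Lemma ereal_inf_nat_eq A m :
  ereal_inf [set (n%:R : R)%:E | n in A] = (m%:R)%:E ->
  A m /\ forall k, A k -> (m <= k)%N.
Proof.
case: (ereal_inf_natP A) => [-> //|[n [-> An n_min]] /eqP].
by rewrite eqe eqr_nat => /eqP <-.
Qed.

Lemma ereal_inf_nat_gt A k :
  (k%:R)%:E < ereal_inf [set (n%:R : R)%:E | n in A] ->
  (k.+1%:R)%:E <= ereal_inf [set (n%:R : R)%:E | n in A].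
Proof.
case: (ereal_inf_natP A) => [-> _|[m [-> _ _]]]; first exact: leey.
by rewrite lte_fin lee_fin ltr_nat ler_nat.
Qed.

End ereal_inf_nat.

Section sign_runs.
Context {d : measure_display} {T : measurableType d} {R : realType}.
Variables (X Y : nat -> T -> R) (w : T).

Lemma sgr_notDn n : ~~ Dn X n w -> Num.sg (X n w) = Num.sg (X n.-1 w).
Proof. by rewrite /Dn; case: sgrP; case: sgrP. Qed.

Lemma sgr_mul_Dn_le0 n : Dn X n w -> Num.sg (X n w) * X n.-1 w <= 0.
Proof.
rewrite /Dn; case: sgrP => _ //=; rewrite ?mul0r ?mul1r ?mulN1r ?orbF //.
- by rewrite -leNgt.
- by rewrite oppr_le0 -leNgt.
Qed.

Lemma sgr_run m i : (forall k, (m < k <= i)%N -> ~~ Dn X k w) ->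
  forall k, (m <= k <= i)%N -> Num.sg (X k w) = Num.sg (X m w).
Proof.
move=> noD; elim=> [|k IH] /andP[mk ki]; first by move: mk; rewrite leqn0 => /eqP ->.
move: mk; rewrite leq_eqVlt => /orP[/eqP -> //|mk].
by rewrite sgr_notDn ?noD ?mk ?ki //= IH // -ltnS mk ltnW.
Qed.

Variable alpha : nat -> R.
Hypothesis alpha_ge0 : forall n, 0 <= alpha n.
Hypothesis ratio_bounds : forall n, (1 <= n)%N -> X n.-1 w != 0 ->
  0 <= Y n w / X n.-1 w <= 1 + alpha n.

Lemma abs_run_bound m i : (1 <= m <= i)%N -> Dn X m w ->
  (forall k, (m < k <= i)%N -> ~~ Dn X k w) ->
  `|X i w| <= \prod_(m <= k < i.+1) (1 + alpha k) *
                (`|Uproc X Y m w| + \sum_(m <= k < i.+1) `|eps X Y k w|).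
Proof.
move=> /andP[m_gt0 mi] Dm noD.
have sgX := sgr_run noD.
set s := Num.sg (X m w).
have [s0|s_neq0] := eqVneq s 0.
  have /eqP -> : X i w == 0 by rewrite -sgr_eq0 sgX ?mi ?leqnn //; apply/eqP.
  rewrite normr0 mulr_ge0 //; first exact: le_trans (prod1D_ge1 _ _ alpha_ge0).
  by rewrite addr_ge0 // sumr_ge0.
have normsM x : `|s * x| = `|x|.
  by rewrite normrM normr_sg -sgr_eq0 -/s s_neq0 mul1r.
have sX k : (m <= k <= i)%N -> s * X k w = `|X k w|.
  by move=> mki; rewrite normrEsg sgX.
rewrite -sX ?mi ?leqnn //.
rewrite [X in _ + X](eq_bigr (fun k => `|s * eps X Y k w|)) => [|k _]; last first.
  by rewrite normsM.
apply: (run_bound (x := fun k => s * X k w) (y := fun k => s * Y k w)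
    (e := fun k => s * eps X Y k w)) => //.
- (* X_{m-1} is either 0, where U_m = Y_m, or of sign opposite to s. *)
  rewrite /Uproc; have [Xm0|Xm_neq0] := eqVneq (X m.-1 w) 0.
    by rewrite mulr1 -(normsM (Y m w)) ler_norm.
  rewrite mulr0 normr0 -[Y m w](divfK Xm_neq0) mulrCA.
  apply: mulr_ge0_le0; last exact: sgr_mul_Dn_le0.
  by case/andP: (ratio_bounds m_gt0 Xm_neq0).
- by move=> k; rewrite /eps mulrBr addrC subrK.
- move=> k /andP[mk ki].
  have [k_gt0 mk1] : (0 < k)%N /\ (m <= k.-1 <= i)%N by lia.
  have Xk1_neq0 : X k.-1 w != 0 by rewrite -sgr_eq0 sgX.
  rewrite -[Y k w](divfK Xk1_neq0) mulrCA; apply: ler_wpM2r.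
    by rewrite sX.
  by case/andP: (ratio_bounds k_gt0 Xk1_neq0).
Qed.

End sign_runs.

Lemma lambda_max_ge (R : realType) (alpha : nat -> R) m n : (1 <= m <= n)%N ->
  ((\prod_(m <= k < n.+1) (1 + alpha k))%:E <= lambda_max alpha)%E.
Proof.
move=> /andP[m_gt0 mn]; apply: ereal_sup_ubound; exists (n.+1 - m)%N, n.
by split; [lia | lia | rewrite /lambda subKn // ltnW].
Qed.

Lemma Mabs_ge_sum d (T : measurableType d) (R : realType) (X Y : nat -> T -> R)
    s (t : \bar R) w n :
  (forall k, (s <= k <= n)%N -> ((k%:R)%:E <= t)%E) ->
  ((\sum_(s <= k < n.+1) `|eps X Y k w|)%:E <= Mabs X Y s t w)%E.
Proof.
move=> le_t; apply: esum_ge; exists [set` index_iota s n.+1].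
  split; first exact: finite_seq.
  by move=> k /=; rewrite mem_index_iota ltnS => skn; split; [case/andP: skn | apply: le_t].
by rewrite -fsbig_seq ?iota_uniq // sumEFin.
Qed.

Unset Implicit Arguments.

Theorem lemmaA2 (d : measure_display) (T : measurableType d) (R : realType)
  (P : probability T R) (F : nat -> set (set T)) (X Y : nat -> T -> R)
  (alpha : nat -> R) :
  filtration F ->
  (forall n, Gmeasurable (F n) (X n)) ->
  (forall n, P.-integrable setT (EFin \o X n)) ->
  (forall n, (1 <= n)%N -> is_cond_exp P (F n.-1) (X n) (Y n)) ->
  (* (A1) *)
  (forall n, 0 <= alpha n) ->
  cvgn (series alpha) ->
  {ae P, forall w, forall n, (1 <= n)%N -> X n.-1 w != 0 ->
     0 <= Y n w / X n.-1 w <= 1 + alpha n} ->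
  forall j, (1 <= j)%N ->
  {ae P, forall w,
     (forall t : nat, Tj X j w = (t%:R)%:E ->
        (Wj X j w <= lambda_max alpha *
           (Mabs X Y t (Tj X j.+1 w - 1) w + (`|Uproc X Y t w|)%:E))%E)
     /\ (Tj X j w = +oo%E -> (Wj X j w <= 0)%E)}.
Proof.
move=> _ _ _ _ alpha_ge0 _ ratio_ae j j_gt0.
apply: filterS ratio_ae => w ratio_bounds.
split=> [m Tjm|Tj_oo]; last by rewrite /Wj Tj_oo ltxx.
have [[m_gt0 jm] m_min] := ereal_inf_nat_eq Tjm.
have Dm : Dn X m w.
  by apply: (hit_at_first_passage j_gt0 m_gt0 jm) => k k_gt0 jk; apply: m_min.
rewrite /Wj Tjm ltry; apply/ereal_supP => _ [i [mi iTj1] <-].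
move: mi; rewrite lee_fin ler_nat => mi.
have ji : ~~ (j < nhits (Dn X ^~ w) i)%N.
  apply/negP => ji; have : (Tj X j.+1 w <= (i%:R)%:E)%E.
    by apply: ereal_inf_lbound; exists i => //; split => //; exact: leq_trans mi.
  by rewrite leNgt iTj1.
have le_Tj1 k : (m <= k <= i)%N -> ((k%:R)%:E <= Tj X j.+1 w - 1)%E.
  move=> /andP[_ ki]; rewrite leeBrDr // -EFinD natr1; apply: ereal_inf_nat_gt.
  by apply: le_lt_trans iTj1; rewrite lee_fin ler_nat.
have := abs_run_bound alpha_ge0 ratio_bounds (introT andP (conj m_gt0 mi)) Dm
  (no_hit_before_next_passage jm ji).
set L := \prod_(m <= k < i.+1) (1 + alpha k).
set S := \sum_(m <= k < i.+1) `|eps X Y k w|.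
move=> Xi_le; apply: (@le_trans _ _ (L%:E * ((`|Uproc X Y m w|)%:E + S%:E))%E).
  by rewrite -EFinD -EFinM lee_fin.
rewrite addeC; apply: lee_pmul.
- by rewrite lee_fin; apply: le_trans (prod1D_ge1 _ _ alpha_ge0).
- by rewrite adde_ge0 // lee_fin sumr_ge0.
- exact: lambda_max_ge (introT andP (conj m_gt0 mi)).
- by apply: leeD => //; exact: Mabs_ge_sum.
Qed.
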